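(* Let $H$ and $K$ be finite groups and $G = H \times K$. Then: (i) $\eta(G) \ge \eta(H)\eta(K)$. (ii) If $\gcd(|H|,|K|) = 1$, then $\eta(G) = \eta(H)\eta(K)$. (iii) If $p$ is a prime dividing $|K|$ and $H$ is a nontrivial $p$-group, then $\eta(G) \ge \eta(H)\eta(K) + \eta_p(K) > \eta(H)\eta(K)$, where $\eta_p(K)$ is the number of conjugacy classes of maximal cyclic subgroups of $K$ whose order is divisible by $p$. (iv) If $H$ is nilpotent and a prime $p$ divides both $|H|$ and $|K|$, then $\eta(G) > \eta(K)$. (v) If $H$ and $K$ are both nontrivial $p$-groups for a prime $p$, then $\eta(G) \ge \eta(H)\eta(K) + \eta(H) + \eta(K)$.
   Context: A cyclic subgroup $C$ of a finite group $G$ is maximal cyclic if there is no cyclic subgroup $D$ of $G$ with $C < D$. $\eta(G)$ denotes the number of conjugacy classes of maximal cyclic subgroups of $G$. *)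

From mathcomp Require Import all_boot all_fingroup all_solvable.
Set Implicit Arguments. Unset Strict Implicit. Unset Printing Implicit Defensive.
Local Open Scope group_scope.

Definition maxcyclic (gT : finGroupType) (G C : {set gT}) : bool :=
  [max C of D | (D \subset G) && cyclic D].

Definition maxcyclics_with (gT : finGroupType) (P : nat -> bool) (G : {set gT})
  : {set {set gT}} := [set C : {set gT} | maxcyclic G C && P #|C|].

Definition eta (gT : finGroupType) (G : {set gT}) : nat :=
  #|[set C :^: G | C in maxcyclics_with predT G]|.

Definition eta_p (gT : finGroupType) (p : nat) (G : {set gT}) : nat :=
  #|[set C :^: G | C in maxcyclics_with (fun n => p %| n) G]|.

From mathcomp Require Import all_boot all_fingroup all_solvable.
Set Implicit Arguments. Unset Strict Implicit. Unset Printing Implicit Defensive.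
Local Open Scope group_scope.

(* Send a maximal cyclic subgroup M of H x K to the pair of conjugacy classes
   of its two projections. This is constant on conjugacy classes of H x K, so
   eta (H x K) is at least the number of pairs obtained. Every pair of classes
   of maximal cyclic subgroups arises, from a maximal cyclic subgroup over
   (c, d) with <[c]>, <[d]> maximal cyclic. When |H| and |K| are coprime, M is
   the product of its projections, which are maximal cyclic, and the map is
   injective on classes. Further pairs come from a maximal cyclic M over (1, d)
   with <[d]> maximal cyclic in K: if (x, y) generates M then (1, y) is a power
   of (x, y), which forces #[x] and #[y] to be coprime. The first projection of
   M then has order prime to p: it is trivial if H is a p-group, and it is not
   maximal cyclic if H is nilpotent, since there a maximal cyclic subgroup
   absorbs a central element of order p. *)

Lemma cardsU_disjoint (T : finType) (A B : {set T}) :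
  [disjoint A & B] -> #|A :|: B| = (#|A| + #|B|)%N.
Proof. by move=> dAB; rewrite -cardsUI disjoint_setI0 // cards0 addn0. Qed.

Lemma disjoint_setX (aT bT : finType) (A1 B1 : {set aT}) (A2 B2 : {set bT}) :
  [disjoint A1 & B1] || [disjoint A2 & B2] -> [disjoint setX A1 A2 & setX B1 B2].
Proof.
move=> dAB; rewrite -setI_eq0; apply/eqP/setP=> -[x1 x2]; rewrite !inE /=.
by case/orP: dAB => /disjointFr dAB; [case A1x: (x1 \in A1) | case A2x: (x2 \in A2)];
  rewrite ?(dAB _ A1x) ?(dAB _ A2x) ?andbF.
Qed.

Lemma pgroup_coprime_trivg (gT : finGroupType) (p : nat) (A : {group gT}) n :
  p.-group A -> p %| n -> coprime #|A| n -> A :=: 1.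
Proof.
move=> pA pn coAn; apply/eqP; apply: contraLR pn => ntA.
have [p_pr pA' _] := pgroup_pdiv pA ntA.
by rewrite -prime_coprime // (coprime_dvdl pA' coAn).
Qed.

Section MaxCyclic.
Variable gT : finGroupType.
Implicit Types (G C : {group gT}) (A : {set gT}).

Definition maxcyclic_classes (G : {set gT}) : {set {set {set gT}}} :=
  [set C :^: G | C in maxcyclics_with predT G].

Lemma maxcyclicP G C :
  reflect [/\ C \subset G, cyclic C &
     forall D : {group gT}, D \subset G -> cyclic D -> C \subset D -> D :=: C]
   (maxcyclic G C).
Proof.
apply: (iffP maxgroupP) => [[/andP[sCG cC] maxC] | [sCG cC maxC]].
  by split=> // D sDG cD; apply: maxC; rewrite sDG.
by split=> [|D /andP[]]; [rewrite sCG | apply: maxC].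
Qed.

Lemma maxcyclic_group (G A : {set gT}) : maxcyclic G A -> {C : {group gT} | A = C}.
Proof. by case/maxsetp/andP=> gA _; exists (Group gA). Qed.

Lemma maxcyclic_exists G x : x \in G -> {C : {group gT} | maxcyclic G C & x \in C}.
Proof.
move=> Gx; have cycP : (<[x]>%G \subset G) && cyclic <[x]>%G.
  by rewrite cycle_subG Gx cycle_cyclic.
have [C maxC] :=
  maxgroup_exists (gP := fun D : {group gT} => (D \subset G) && cyclic D) cycP.
by rewrite cycle_subG; exists C.
Qed.

Lemma maxcyclicJ G A g : g \in G -> maxcyclic G (A :^ g) = maxcyclic G A.
Proof.
suffices maxJ B y : y \in G -> maxcyclic G B -> maxcyclic G (B :^ y).
  move=> Gg; apply/idP/idP; last exact: maxJ.
  by move/(maxJ _ _ (groupVr Gg)); rewrite conjsgK.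
move=> Gy /[dup] /maxcyclic_group[C ->] /maxcyclicP[sCG cC maxC].
apply/(maxcyclicP G (C :^ y)%G); split; first by rewrite -(conjGid Gy) conjSg.
  by rewrite cyclicJ.
move=> D sDG cD sCyD; have defC: D :^ y^-1 = C.
  apply: (maxC (D :^ y^-1)%G); rewrite ?cyclicJ -?sub_conjg //.
  by rewrite -(conjGid (groupVr Gy)) conjSg.
by rewrite /= -defC conjsgKV.
Qed.

Lemma mem_maxcyclic_classes G A :
  (A :^: G \in maxcyclic_classes G) = maxcyclic G A.
Proof.
apply/imsetP/idP=> [[B] | maxA]; last by exists A; rewrite // inE maxA.
rewrite inE andbT => maxB eqAB.
have /imsetP[g Gg ->] : A \in B :^: G by rewrite -eqAB; apply: (orbit_refl 'Js).
by rewrite maxcyclicJ.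
Qed.

Lemma maxcyclic_classesP G X :
  reflect (exists2 C : {group gT}, maxcyclic G C & X = C :^: G)
          (X \in maxcyclic_classes G).
Proof.
apply: (iffP imsetP) => [[A] | [C maxC ->]]; last by exists (gval C); rewrite ?inE ?maxC.
by rewrite inE andbT => /[dup] /maxcyclic_group[C ->] maxC ->; exists C.
Qed.

Lemma maxcyclic1 G : maxcyclic G 1 = (G :==: 1).
Proof.
apply/idP/eqP=> [/(maxcyclicP _ 1%G)[_ _ max1] | ->].
  apply/trivgP/subsetP=> x Gx.
  by rewrite -(max1 <[x]>%G) ?cycle_id ?cycle_subG ?cycle_cyclic ?sub1G.
by apply/(maxcyclicP _ 1%G); split=> [||D /trivgP]; rewrite ?sub1G ?cyclic1.
Qed.

Lemma eta_gt0 G : 0 < eta G.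
Proof.
have [C maxC _] := maxcyclic_exists (group1 G).
by apply/card_gt0P; exists (C :^: G); rewrite mem_maxcyclic_classes.
Qed.

Lemma eta_p_gt0 p G : prime p -> p %| #|G| -> 0 < eta_p p G.
Proof.
move=> p_pr pG; have [x Gx ox] := Cauchy p_pr pG.
have [C maxC Cx] := maxcyclic_exists Gx.
apply/card_gt0P; exists (C :^: G); apply/imsetP; exists (gval C) => //.
by rewrite inE maxC -ox order_dvdG.
Qed.

Lemma nilpotent_maxcyclic_pdiv p G C :
  nilpotent G -> prime p -> p %| #|G| -> maxcyclic G C -> p %| #|C|.
Proof.
move=> nilG p_pr pG /maxcyclicP[sCG /cyclicP[x defC] maxC]; apply: contraT => p'C.
have: p \in \pi('Z(G)) by rewrite pi_center_nilpotent // mem_primes p_pr cardG_gt0.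
rewrite mem_primes => /and3P[_ _ pZ]; have [z /setIP[Gz cGz] oz] := Cauchy p_pr pZ.
have Gx : x \in G by rewrite -cycle_subG -defC.
have cxz : commute x z by apply/esym/(centP cGz).
have coxz : coprime #[x] #[z] by rewrite oz coprime_sym prime_coprime // /order -defC.
have defCxz : <[x * z]> = C.
  apply: (maxC <[x * z]>%G); rewrite ?cycle_subG ?groupM ?cycle_cyclic //.
  by rewrite defC cycleMsub.
have Cz : z \in C by rewrite -defCxz cycleM // (subsetP (mulG_subr _ _)) ?cycle_id.
by move: p'C; rewrite -oz order_dvdG.
Qed.

Lemma pgroup_maxcyclic_pdiv (p : nat) G C :
  p.-group G -> G :!=: 1 -> maxcyclic G C -> p %| #|C|.
Proof.
move=> pG ntG; have [p_pr pdvG _] := pgroup_pdiv pG ntG.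
exact: nilpotent_maxcyclic_pdiv (pgroup_nil pG) p_pr pdvG.
Qed.

Section ClassInvariant.
Variables (G : {group gT}) (S : {set {set gT}}) (T : finType) (F : {set gT} -> T).
Hypothesis FJ : {in S & G, forall A g, F (A :^ g) = F A}.

Lemma F_repr_class A : A \in S -> F (repr (A :^: G)) = F A.
Proof.
move=> SA; have /imsetP[g Gg ->] : repr (A :^: G) \in A :^: G.
  exact/mem_repr/(orbit_refl 'Js).
exact: FJ.
Qed.

Lemma imset_repr_classes : [set F (repr X) | X in [set A :^: G | A in S]] = F @: S.
Proof. by rewrite -imset_comp; apply: eq_in_imset => A /F_repr_class. Qed.

Lemma leq_imset_classes : #|F @: S| <= #|[set A :^: G | A in S]|.
Proof. by rewrite -imset_repr_classes leq_imset_card. Qed.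

Lemma card_imset_classes :
  {in S &, forall A B, F A = F B -> B \in A :^: G} ->
  #|[set A :^: G | A in S]| = #|F @: S|.
Proof.
move=> sepF; rewrite -imset_repr_classes; apply/esym/card_in_imset.
move=> _ _ /imsetP[A SA ->] /imsetP[B SB ->]; rewrite !F_repr_class //.
by move/(sepF A B SA SB)/(orbit_eqP (to := 'Js%act)).
Qed.

End ClassInvariant.

End MaxCyclic.

Lemma coprime_order_expg (aT bT : finGroupType) (x : aT) (y : bT) n :
  x ^+ n = 1 -> y ^+ n = y -> coprime #[x] #[y].
Proof.
case: n => [|n] xn yn; first by rewrite -yn order1 coprimen1.
have yn1 : y ^+ n = 1 by apply: (mulgI y); rewrite -expgS yn mulg1.
apply: coprime_dvdl (coprime_dvdr _ (coprimeSn n)); by rewrite order_dvdn ?xn ?yn1.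
Qed.

Section DirectProduct.
Variables (gT rT : finGroupType) (H : {group gT}) (K : {group rT}).

Local Notation fstm := [morphism of fun x : gT * rT => x.1].
Local Notation sndm := [morphism of fun x : gT * rT => x.2].

Lemma expg_pair (x : gT) (y : rT) n : (x, y) ^+ n = (x ^+ n, y ^+ n).
Proof. by elim: n => // n IHn; rewrite !expgS IHn. Qed.

Lemma setXJ (A : {set gT}) (B : {set rT}) h k :
  setX (A :^ h) (B :^ k) = setX A B :^ (h, k).
Proof. by apply/setP=> -[a b]; rewrite mem_conjg !in_setX !mem_conjg. Qed.

Lemma morphim_fst_sub (M : {set gT * rT}) : M \subset setX H K -> fstm @* M \subset H.
Proof. by move/(morphimS fstm); rewrite morphim_fstX. Qed.

Lemma morphim_snd_sub (M : {set gT * rT}) : M \subset setX H K -> sndm @* M \subset K.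
Proof. by move/(morphimS sndm); rewrite morphim_sndX. Qed.

Definition proj_classes (M : {set gT * rT}) := ((fstm @* M) :^: H, (sndm @* M) :^: K).

Local Notation maxcyclic_proj_classes :=
  (proj_classes @: maxcyclics_with predT (setX H K)).

Lemma proj_classesJ M g : g \in setX H K -> proj_classes (M :^ g) = proj_classes M.
Proof.
case: g => h k; rewrite in_setX => /andP[Hh Kk].
by rewrite /proj_classes !morphimJ ?inE //= !conjugates_conj !lcoset_id.
Qed.

Lemma leq_proj_classes_eta : #|maxcyclic_proj_classes| <= eta (setX H K).
Proof.
by apply: (leq_imset_classes (G := setX_group H K)) => M g _; apply: proj_classesJ.
Qed.

Lemma proj_classes_maxcyclic (C : {group gT}) (D : {group rT}) :
  maxcyclic H C -> maxcyclic K D -> (C :^: H, D :^: K) \in maxcyclic_proj_classes.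
Proof.
move=> /maxcyclicP[sCH /cyclicP[c defC] maxC] /maxcyclicP[sDK /cyclicP[d defD] maxD].
have Gcd : (c, d) \in setX H K by rewrite in_setX -!cycle_subG -defC -defD sCH.
have [M maxM Mcd] := maxcyclic_exists Gcd; have /maxcyclicP[sMG cM _] := maxM.
have fstM : fstm @* M = C.
  apply: (maxC (fstm @* M)%G); rewrite ?morphim_fst_sub ?morphim_cyclic //.
  by rewrite defC cycle_subG (mem_morphim fstm _ Mcd) ?inE.
have sndM : sndm @* M = D.
  apply: (maxD (sndm @* M)%G); rewrite ?morphim_snd_sub ?morphim_cyclic //.
  by rewrite defD cycle_subG (mem_morphim sndm _ Mcd) ?inE.
by apply/imsetP; exists (gval M); rewrite ?inE ?maxM // /proj_classes fstM sndM.
Qed.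

Lemma exists_maxcyclic_sndX (D : {group rT}) : maxcyclic K D ->
  exists2 M : {group gT * rT}, maxcyclic (setX H K) M &
    sndm @* M = D /\ coprime #|fstm @* M| #|D|.
Proof.
move=> /maxcyclicP[sDK /cyclicP[d defD] maxD].
have Gd : (1, d) \in setX H K by rewrite in_setX group1 -cycle_subG -defD.
have [M maxM Md] := maxcyclic_exists Gd.
have /maxcyclicP[sMG cM _] := maxM; have [[x y] defM] := cyclicP cM.
have sndM : sndm @* M = D.
  apply: (maxD (sndm @* M)%G); rewrite ?morphim_snd_sub ?morphim_cyclic //.
  by rewrite defD cycle_subG (mem_morphim sndm _ Md) ?inE.
exists M => //; split=> //.
have defDy : <[y]> = D by rewrite -sndM defM morphim_cycle ?inE.
rewrite defM morphim_cycle ?inE // -defDy.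
have /cycleP[m ym] : y \in <[d]> by rewrite -defD -defDy cycle_id.
have /cycleP[n /esym] : (1, y) \in <[(x, y)]>.
  by rewrite -defM ym -[1](expg1n _ m) -expg_pair groupX.
by rewrite expg_pair => -[xn yn]; apply: coprime_order_expg xn yn.
Qed.

Lemma exists_maxcyclic_fstX (C : {group gT}) : maxcyclic H C ->
  exists2 M : {group gT * rT}, maxcyclic (setX H K) M &
    fstm @* M = C /\ coprime #|C| #|sndm @* M|.
Proof.
move=> /maxcyclicP[sCH /cyclicP[c defC] maxC].
have Gc : (c, 1) \in setX H K by rewrite in_setX group1 andbT -cycle_subG -defC.
have [M maxM Mc] := maxcyclic_exists Gc.
have /maxcyclicP[sMG cM _] := maxM; have [[x y] defM] := cyclicP cM.
have fstM : fstm @* M = C.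
  apply: (maxC (fstm @* M)%G); rewrite ?morphim_fst_sub ?morphim_cyclic //.
  by rewrite defC cycle_subG (mem_morphim fstm _ Mc) ?inE.
exists M => //; split=> //.
have defCx : <[x]> = C by rewrite -fstM defM morphim_cycle ?inE.
rewrite defM morphim_cycle ?inE // -defCx.
have /cycleP[m xm] : x \in <[c]> by rewrite -defC -defCx cycle_id.
have /cycleP[n /esym] : (x, 1) \in <[(x, y)]>.
  by rewrite -defM xm -[1](expg1n _ m) -expg_pair groupX.
by rewrite expg_pair => -[xn yn]; rewrite coprime_sym; apply: coprime_order_expg yn xn.
Qed.

Lemma proj_classes_1X (p : nat) (D : {group rT}) :
  p.-group H -> maxcyclic K D -> p %| #|D| ->
  (1 :^: H, D :^: K) \in maxcyclic_proj_classes.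
Proof.
move=> pH maxD pD; have [M maxM [sndM coM]] := exists_maxcyclic_sndX maxD.
have /maxcyclicP[sMG _ _] := maxM.
have fstM : fstm @* M = 1.
  exact: pgroup_coprime_trivg (pgroupS (morphim_fst_sub sMG) pH) pD coM.
by apply/imsetP; exists (gval M); rewrite ?inE ?maxM // /proj_classes fstM sndM.
Qed.

Lemma proj_classes_X1 (p : nat) (C : {group gT}) :
  p.-group K -> maxcyclic H C -> p %| #|C| ->
  (C :^: H, 1 :^: K) \in maxcyclic_proj_classes.
Proof.
move=> pK maxC pC; have [M maxM [fstM coM]] := exists_maxcyclic_fstX maxC.
have /maxcyclicP[sMG _ _] := maxM.
have sndM : sndm @* M = 1.
  apply: pgroup_coprime_trivg (pgroupS (morphim_snd_sub sMG) pK) pC _.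
  by rewrite coprime_sym.
by apply/imsetP; exists (gval M); rewrite ?inE ?maxM // /proj_classes fstM sndM.
Qed.

Lemma nilpotent_proj_classes_nonmax (p : nat) :
  nilpotent H -> prime p -> p %| #|H| -> p %| #|K| ->
  exists2 X, X \in maxcyclic_proj_classes & X.1 \notin maxcyclic_classes H.
Proof.
move=> nilH p_pr pH pK; have [k Kk ok] := Cauchy p_pr pK.
have [D maxD Dk] := maxcyclic_exists Kk.
have pD : p %| #|D| by rewrite -ok order_dvdG.
have [M maxM [sndM coM]] := exists_maxcyclic_sndX maxD.
exists (proj_classes M); first by apply/imsetP; exists (gval M); rewrite ?inE ?maxM.
rewrite mem_maxcyclic_classes; apply: contraL pD.
move/(nilpotent_maxcyclic_pdiv nilH p_pr pH) => pM.
by rewrite -prime_coprime // (coprime_dvdl pM coM).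
Qed.

Lemma setX_maxcyclic_classes_sub :
  setX (maxcyclic_classes H) (maxcyclic_classes K) \subset maxcyclic_proj_classes.
Proof.
apply/subsetP=> -[X Y]; rewrite in_setX => /andP[/maxcyclic_classesP[C maxC ->]].
by case/maxcyclic_classesP=> D maxD ->; apply: proj_classes_maxcyclic.
Qed.

Lemma leq_eta_setX : eta H * eta K <= eta (setX H K).
Proof.
rewrite -cardsX; apply: leq_trans leq_proj_classes_eta.
exact: subset_leq_card setX_maxcyclic_classes_sub.
Qed.

Lemma eta_setX_pgroup (p : nat) : p.-group H -> H :!=: 1 ->
  eta H * eta K + eta_p p K <= eta (setX H K).
Proof.
move=> pH ntH.
have notH1 : 1 :^: H \notin maxcyclic_classes H.
  by rewrite mem_maxcyclic_classes maxcyclic1.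
rewrite -cardsX -[eta_p p K]mul1n -(cards1 (1 :^: H)) -cardsX.
rewrite -cardsU_disjoint; last first.
  by apply/disjoint_setX/orP; left; rewrite disjoint_sym disjoints1.
apply: leq_trans leq_proj_classes_eta; apply/subset_leq_card.
rewrite subUset setX_maxcyclic_classes_sub; apply/subsetP=> -[X Y].
rewrite in_setX => /andP[/set1P-> /imsetP[D]].
rewrite inE => /andP[/[dup] /maxcyclic_group[{}D ->] maxD pD] ->.
exact: proj_classes_1X pH maxD pD.
Qed.

Lemma eta_setX_nilpotent (p : nat) :
  nilpotent H -> prime p -> p %| #|H| -> p %| #|K| -> eta K < eta (setX H K).
Proof.
move=> nilH p_pr pH pK.
have [X imX nmaxX] := nilpotent_proj_classes_nonmax nilH p_pr pH pK.
have leKHK : eta K <= eta H * eta K by rewrite leq_pmull ?eta_gt0.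
apply: leq_ltn_trans leKHK _; rewrite -cardsX; apply: leq_trans leq_proj_classes_eta.
set cHK := setX _ _; have notX : X \notin cHK.
  by case: X {imX} nmaxX => X1 X2 /= nmaxX1; rewrite in_setX (negPf nmaxX1).
have cardXU : #|X |: cHK| = #|cHK|.+1 by rewrite cardsU1 notX.
rewrite -cardXU; apply/subset_leq_card.
by rewrite subUset sub1set imX setX_maxcyclic_classes_sub.
Qed.

Lemma eta_setX_pgroups (p : nat) : p.-group H -> H :!=: 1 -> p.-group K -> K :!=: 1 ->
  eta H * eta K + eta H + eta K <= eta (setX H K).
Proof.
move=> pH ntH pK ntK.
have notH1 : 1 :^: H \notin maxcyclic_classes H.
  by rewrite mem_maxcyclic_classes maxcyclic1.
have notK1 : 1 :^: K \notin maxcyclic_classes K.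
  by rewrite mem_maxcyclic_classes maxcyclic1.
have -> : eta H * eta K + eta H + eta K =
          #|setX (1 :^: H |: maxcyclic_classes H) (maxcyclic_classes K) :|:
            setX (maxcyclic_classes H) [set 1 :^: K]|.
  rewrite cardsU_disjoint; last first.
    by apply/disjoint_setX/orP; right; rewrite disjoint_sym disjoints1.
  rewrite !cardsX cardsU1 (negPf notH1) cards1 muln1 add1n mulSn addnAC.
  by congr (_ + _); apply: addnC.
apply: leq_trans leq_proj_classes_eta; apply/subset_leq_card.
rewrite !subUset; apply/andP; split; apply/subsetP=> -[X Y]; rewrite in_setX.
  case/andP=> /setU1P[-> | HX] /maxcyclic_classesP[D maxD ->].
    exact: proj_classes_1X pH maxD (pgroup_maxcyclic_pdiv pK ntK maxD).
  by apply/(subsetP setX_maxcyclic_classes_sub); rewrite in_setX HX mem_maxcyclic_classes.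
case/andP=> /maxcyclic_classesP[C maxC ->] /set1P->.
exact: proj_classes_X1 pK maxC (pgroup_maxcyclic_pdiv pH ntH maxC).
Qed.

Lemma cyclic_setX (A : {group gT}) (B : {group rT}) :
  cyclic A -> cyclic B -> coprime #|A| #|B| -> cyclic (setX A B).
Proof.
move=> cA cB coAB; rewrite (cyclic_dprod (setX_dprod A B)).
- by rewrite !cardsX !cards1 muln1 mul1n.
- by rewrite /= -morphim_pairg1 morphim_cyclic.
by rewrite /= -morphim_pair1g morphim_cyclic.
Qed.

Section Coprime.
Hypothesis coHK : coprime #|H| #|K|.

Lemma maxcyclic_setX_coprime (M : {group gT * rT}) : maxcyclic (setX H K) M ->
  [/\ M :=: setX (fstm @* M) (sndm @* M),
      maxcyclic H (fstm @* M) & maxcyclic K (sndm @* M)].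
Proof.
move=> /maxcyclicP[sMG cM maxM].
have cycX (A : {group gT}) (B : {group rT}) :
    A \subset H -> B \subset K -> cyclic A -> cyclic B -> cyclic (setX A B).
  move=> sAH sBK cA cB; apply: cyclic_setX => //.
  exact: coprime_dvdl (cardSg sAH) (coprime_dvdr (cardSg sBK) coHK).
have sM1 := morphim_fst_sub sMG; have sM2 := morphim_snd_sub sMG.
have cM1 := morphim_cyclic fstm cM; have cM2 := morphim_cyclic sndm cM.
have defM : setX (fstm @* M) (sndm @* M) = M.
  apply: (maxM (setX_group (fstm @* M)%G (sndm @* M)%G)); rewrite /= ?setXS ?cycX //.
  apply/subsetP=> -[a b] Mab; rewrite in_setX.
  by rewrite (mem_morphim fstm _ Mab) ?(mem_morphim sndm _ Mab) ?inE.
split=> //.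
  apply/(maxcyclicP _ (fstm @* M)%G); split=> // C sCH cC sMC.
  have defMC : setX C (sndm @* M) = M.
    by apply: (maxM (setX_group C _)); rewrite /= ?setXS ?cycX // -{1}defM setXS.
  by rewrite /= -(morphim_fstX C (sndm @* M)%G) defMC.
apply/(maxcyclicP _ (sndm @* M)%G); split=> // D sDK cD sMD.
have defMD : setX (fstm @* M) D = M.
  by apply: (maxM (setX_group _ D)); rewrite /= ?setXS ?cycX // -{1}defM setXS.
by rewrite /= -(morphim_sndX (fstm @* M)%G D) defMD.
Qed.

Lemma proj_classes_coprime_sep :
  {in maxcyclics_with predT (setX H K) &, forall M N,
    proj_classes M = proj_classes N -> N \in M :^: setX H K}.
Proof.
move=> M0 N0; rewrite !inE !andbT.
move=> /[dup] /maxcyclic_group[M ->] maxM /[dup] /maxcyclic_group[N ->] maxN [eq1 eq2].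
have [defM _ _] := maxcyclic_setX_coprime maxM.
have [defN _ _] := maxcyclic_setX_coprime maxN.
have /imsetP[h Hh def1] : fstm @* N \in (fstm @* M) :^: H.
  by rewrite eq1; apply: (orbit_refl 'Js).
have /imsetP[k Kk def2] : sndm @* N \in (sndm @* M) :^: K.
  by rewrite eq2; apply: (orbit_refl 'Js).
apply/imsetP; exists (h, k); first by rewrite in_setX Hh Kk.
by rewrite defN def1 def2 setXJ -defM.
Qed.

Lemma eta_setX_coprime : eta (setX H K) = (eta H * eta K)%N.
Proof.
apply/eqP; rewrite eqn_leq leq_eta_setX andbT -cardsX.
have projJ : {in maxcyclics_with predT (setX H K) & setX_group H K,
    forall M g, proj_classes (M :^ g) = proj_classes M}.
  by move=> M g _; apply: proj_classesJ.
rewrite /eta (card_imset_classes projJ proj_classes_coprime_sep).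
apply/subset_leq_card/subsetP=> _ /imsetP[M0 + ->]; rewrite inE andbT.
move=> /[dup] /maxcyclic_group[M ->] maxM.
have [_ max1 max2] := maxcyclic_setX_coprime maxM.
by rewrite in_setX !mem_maxcyclic_classes max1 max2.
Qed.

End Coprime.

End DirectProduct.

Unset Implicit Arguments. Set Strict Implicit.

Theorem lemma2p1 (gT rT : finGroupType) (H : {group gT}) (K : {group rT}) :
  let G := setX H K in
  [/\ (eta H * eta K <= eta G)%N,
      coprime #|H| #|K| -> eta G = (eta H * eta K)%N,
      forall p : nat, prime p -> p %| #|K| -> p.-group H -> H :!=: 1 ->
        (eta H * eta K + eta_p p K <= eta G)%N /\
        (eta H * eta K < eta H * eta K + eta_p p K)%N,
      forall p : nat, nilpotent H -> prime p -> p %| #|H| -> p %| #|K| ->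
        (eta K < eta G)%N &
      forall p : nat, prime p -> p.-group H -> H :!=: 1 ->
        p.-group K -> K :!=: 1 ->
        (eta H * eta K + eta H + eta K <= eta G)%N].
Proof.
split.
- exact: leq_eta_setX.
- exact: eta_setX_coprime.
- move=> p p_pr pK pH ntH; split; first exact: eta_setX_pgroup.
  by rewrite -[X in X < _]addn0 ltn_add2l eta_p_gt0.
- exact: eta_setX_nilpotent.
- by move=> p _; apply: eta_setX_pgroups.
Qed.
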